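(* (i) For every nondeterministic finite automaton with $n$ states there is an IFA with at most $2^n$ states accepting the same language. (ii) For every $n \ge 3$ there exists a nondeterministic finite automaton with $n$ states such that every IFA accepting the same language has at least $2^n - 1$ states. In particular, the worst-case state blowup for converting NFAs to IFAs is $\Theta(2^n)$.
   Context: A $\mathbb{Q}$-weighted automaton $\mathcal{A} = (Q, \Sigma, M, \alpha, \eta)$ consists of a finite state set $Q$, finite alphabet $\Sigma$, $M : \Sigma \to \mathbb{Q}^{Q\times Q}$, initial row vector $\alpha \in \mathbb{Q}^Q$, final column vector $\eta \in \mathbb{Q}^Q$; with $M(a_1\cdots a_k) = M(a_1)\cdots M(a_k)$, it assigns $L_\mathcal{A}(w) = \alpha M(w)\eta$ to each $w \in \Sigma^*$. It is an IFA if $L_\mathcal{A}(w) \in \{0,1\}$ for all $w$, and then its language is $L(\mathcal{A}) = \{w \mid L_\mathcal{A}(w) = 1\}$. The number of states of $\mathcal{A}$ is $|Q|$. *)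

From HB Require Import structures.
From mathcomp Require Import all_boot all_order all_algebra.
Set Implicit Arguments. Unset Strict Implicit. Unset Printing Implicit Defensive.
Import Order.TTheory GRing.Theory Num.Theory.
Local Open Scope ring_scope.

Record nfa (Sigma : finType) (n : nat) := NFA {
  ntrans : Sigma -> 'I_n -> 'I_n -> bool;   (* ntrans a p q : p --a--> q *)
  ninit  : {set 'I_n};
  nfinal : {set 'I_n} }.

Definition nfa_step (Sigma : finType) (n : nat) (A : nfa Sigma n)
  (S : {set 'I_n}) (a : Sigma) : {set 'I_n} :=
  [set q | [exists p in S, ntrans A a p q]].

Definition nfa_reach (Sigma : finType) (n : nat) (A : nfa Sigma n)
  (S : {set 'I_n}) (w : seq Sigma) : {set 'I_n} :=
  foldl (nfa_step A) S w.

Definition nfa_accepts (Sigma : finType) (n : nat) (A : nfa Sigma n)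
  (w : seq Sigma) : bool :=
  (nfa_reach A (ninit A) w :&: nfinal A) != set0.

Record wfa (Sigma : finType) (n : nat) := WFA {
  wM     : Sigma -> 'M[rat]_n;
  walpha : 'rV[rat]_n;
  weta   : 'cV[rat]_n }.

Definition wmat (Sigma : finType) (n : nat) (A : wfa Sigma n)
  (w : seq Sigma) : 'M[rat]_n :=
  foldr (fun a B => wM A a *m B) 1%:M w.

Definition wfa_weight (Sigma : finType) (n : nat) (A : wfa Sigma n)
  (w : seq Sigma) : rat :=
  (walpha A *m wmat A w *m weta A) 0 0.

Definition is_IFA (Sigma : finType) (n : nat) (A : wfa Sigma n) : Prop :=
  forall w, wfa_weight A w = 0 \/ wfa_weight A w = 1.

Definition ifa_accepts (Sigma : finType) (n : nat) (A : wfa Sigma n)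
  (w : seq Sigma) : bool :=
  wfa_weight A w == 1.

From mathcomp Require Import all_boot all_order all_algebra.
Set Implicit Arguments. Unset Strict Implicit. Unset Printing Implicit Defensive.
Import Order.TTheory GRing.Theory Num.Theory.
Local Open Scope ring_scope.

(* Upper bound: the subset construction gives a DFA with 2^n states, and a DFA
   is an IFA whose transition matrices have exactly one 1 in each row.
   Lower bound: there is an NFA on n states accepting the two-letter word
   "S then T" (S, T state sets) iff S and T meet.  The weights of an m-state
   weighted automaton on the words u ++ v form a matrix of rank at most m
   (it factors through 'M_m), while the meet matrix [S :&: T != set0] is the
   all-ones matrix minus the invertible disjointness matrix, so its rank is
   at least 2^n - 1. *)

Lemma card_set (T : finType) : #|{set T}| = (2 ^ #|T|)%N.
Proof. by rewrite -[LHS]cardsT -powersetT card_powerset cardsT. Qed.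

Section WeightedAutomata.
Variables (Sigma : finType) (m : nat) (A : wfa Sigma m).

Lemma wmat_cat u v : wmat A (u ++ v) = wmat A u *m wmat A v.
Proof. by elim: u => [|a u IHu] /=; rewrite ?mul1mx // IHu mulmxA. Qed.

Lemma ifa_weightE w : is_IFA A -> wfa_weight A w = (ifa_accepts A w)%:R.
Proof. by rewrite /ifa_accepts => /(_ w) [] ->. Qed.

Lemma mxrank_wfa_weight_cat p q (u : 'I_p -> seq Sigma) (v : 'I_q -> seq Sigma) :
  (\rank (\matrix_(i, j) wfa_weight A (u i ++ v j)) <= m)%N.
Proof.
pose P := \matrix_(i, l) (walpha A *m wmat A (u i)) 0 l.
pose Q := \matrix_(l, j) (wmat A (v j) *m weta A) l 0.
have -> : \matrix_(i, j) wfa_weight A (u i ++ v j) = P *m Q.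
  apply/matrixP => i j; rewrite !mxE /wfa_weight wmat_cat !mulmxA -mulmxA mxE.
  by apply: eq_bigr => l _; rewrite !mxE.
exact: leq_trans (mxrankM_maxl _ _) (rank_leq_col _).
Qed.

End WeightedAutomata.

Section DeterministicAutomata.
Variables (Sigma Q : finType) (delta : Q -> Sigma -> Q) (q0 : Q) (final : pred Q).

Definition dfa_wfa : wfa Sigma #|Q| :=
  WFA (fun a => \matrix_(i, j) (delta (enum_val i) a == enum_val j)%:R)
      (delta_mx 0 (enum_rank q0)) (\col_j (final (enum_val j))%:R).

Lemma dfa_wfa_run q w :
  (delta_mx 0 (enum_rank q) : 'rV_#|Q|) *m wmat dfa_wfa w
  = delta_mx 0 (enum_rank (foldl delta q w)).
Proof.
elim: w q => [|a w IHw] q /=; first by rewrite mulmx1.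
rewrite mulmxA -rowE -IHw; congr (_ *m _).
apply/matrixP => i j; rewrite !mxE enum_rankK ord1 eqxx /=.
by rewrite -(can_eq enum_valK) enum_rankK eq_sym.
Qed.

Lemma dfa_wfa_weight w : wfa_weight dfa_wfa w = (final (foldl delta q0 w))%:R.
Proof. by rewrite /wfa_weight dfa_wfa_run -rowE !mxE enum_rankK. Qed.

End DeterministicAutomata.

Section MeetMatrix.
Variables (F : fieldType) (T : finType).
Local Notation k := #|{set T}|.

Definition meet_mx : 'M[F]_k := \matrix_(i, j) (enum_val i :&: enum_val j != set0)%:R.
Definition disjoint_mx : 'M[F]_k := \matrix_(i, j) (enum_val i :&: enum_val j == set0)%:R.

(* Column ~: S of [v *m disjoint_mx = 0] reads \sum_(S' \subset S) v S' = 0,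
   so v vanishes by induction on #|S|. *)
Lemma row_free_disjoint_mx : row_free disjoint_mx.
Proof.
apply: inj_row_free => v v_ker; apply/rowP => i; rewrite mxE.
elim: {i}#|enum_val i|.+1 {-2}i (ltnSn #|enum_val i|) => [//|c IHc] i lt_i_c.
have := congr1 (fun M : 'rV_k => M 0 (enum_rank (~: enum_val i))) v_ker.
rewrite !mxE (bigD1 i) //= big1 ?addr0.
  by rewrite !mxE enum_rankK setICr eqxx mulr1.
move=> j neq_ji; rewrite !mxE enum_rankK setI_eq0 disjoints_subset setCK.
have [sub_ji|] := boolP (enum_val j \subset enum_val i); last by rewrite mulr0.
have prop_ji : enum_val j \proper enum_val i.
  by rewrite properEneq sub_ji (inj_eq enum_val_inj) neq_ji.
by rewrite IHc ?mul0r // (leq_trans (proper_card prop_ji)).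
Qed.

Lemma mxrank_const_mx_le1 m n (a : F) : (\rank (const_mx a : 'M_(m, n)) <= 1)%N.
Proof.
have -> : const_mx a = (const_mx a : 'cV_m) *m (const_mx 1 : 'rV_n).
  by apply/matrixP => i j; rewrite !mxE big_ord1 !mxE mulr1.
exact: leq_trans (mxrankM_maxr _ _) (rank_leq_row _).
Qed.

Lemma mxrank_meet_mx : (k <= \rank meet_mx + 1)%N.
Proof.
rewrite -{1}(eqP row_free_disjoint_mx).
have -> : disjoint_mx = const_mx 1 - meet_mx.
  by apply/matrixP => i j; rewrite !mxE; case: eqP; rewrite ?subr0 ?subrr.
apply: leq_trans (mxrank_add _ _) _.
by rewrite mxrank_opp addnC leq_add2l mxrank_const_mx_le1.
Qed.

End MeetMatrix.

Section MeetAutomaton.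
Variables (n : nat) (q0 : 'I_n).

(* Letter (false, S) moves from anywhere to S; letter (true, T) moves from T to q0. *)
Definition meet_nfa : nfa (bool * {set 'I_n})%type n :=
  NFA (fun (a : bool * {set 'I_n}) p q =>
         if a.1 then (p \in a.2) && (q == q0) else q \in a.2)
      setT [set q0].

Lemma meet_nfa_accepts S T :
  nfa_accepts meet_nfa [:: (false, S); (true, T)] = (S :&: T != set0).
Proof.
rewrite /nfa_accepts /nfa_reach /= /nfa_step /=.
have -> : [set q | [exists p in [set: 'I_n], q \in S]] = S.
  apply/setP => q; rewrite inE; apply/existsP/idP => [[p /andP[_ ->]] // | qS].
  by exists q0; rewrite inE qS.
apply/set0Pn/set0Pn => [[q] | [q]].
  rewrite !inE => /andP[/existsP[p /and3P[pS pT _]] _].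
  by exists p; rewrite inE pS pT.
rewrite inE => /andP[qS qT]; exists q0; rewrite !inE eqxx andbT.
by apply/existsP; exists q; rewrite qS qT.
Qed.

Lemma meet_nfa_ifa_size m (A : wfa (bool * {set 'I_n})%type m) :
  is_IFA A -> (forall w, ifa_accepts A w = nfa_accepts meet_nfa w) ->
  (2 ^ n - 1 <= m)%N.
Proof.
move=> A_ifa A_lang.
have meetE : meet_mx rat 'I_n =
    \matrix_(i, j) wfa_weight A ([:: (false, enum_val i)] ++ [:: (true, enum_val j)]).
  by apply/matrixP => i j; rewrite !mxE ifa_weightE // A_lang meet_nfa_accepts.
rewrite leq_subLR addnC -{1}(card_ord n) -card_set.
apply: leq_trans (mxrank_meet_mx rat 'I_n) _.
by rewrite meetE leq_add2r mxrank_wfa_weight_cat.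
Qed.

End MeetAutomaton.

Theorem proposition4 :
  (forall (Sigma : finType) (n : nat) (N : nfa Sigma n),
     exists (m : nat) (A : wfa Sigma m),
       (m <= 2 ^ n)%N /\ is_IFA A /\
       (forall w, ifa_accepts A w = nfa_accepts N w))
  /\
  (forall n : nat, (3 <= n)%N ->
     exists (Sigma : finType) (N : nfa Sigma n),
       forall (m : nat) (A : wfa Sigma m),
         is_IFA A -> (forall w, ifa_accepts A w = nfa_accepts N w) ->
         (2 ^ n - 1 <= m)%N).
Proof.
split=> [Sigma n N | [//|n] _].
  pose final S := S :&: nfinal N != set0.
  exists #|{set 'I_n}|, (dfa_wfa (nfa_step N) (ninit N) final).
  have weightE w : wfa_weight (dfa_wfa (nfa_step N) (ninit N) final) w
                   = (nfa_accepts N w)%:R := dfa_wfa_weight _ _ _ w.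
  split; first by rewrite card_set card_ord.
  split=> w; rewrite ?/ifa_accepts weightE; case: nfa_accepts; by [left|right|].
exists (bool * {set 'I_n.+1})%type, (meet_nfa ord0).
exact: meet_nfa_ifa_size.
Qed.
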